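(* Let $\mathbb{A}$ and $\mathbb{B}$ be $\sigma$-structures and let $k\ge\max_{f\in\sigma}\mathrm{ar}(f)$. If there is an overcast from $\mathbb{A}$ to $\mathbb{B}$, then $\mathbb{A}\succeq_k\mathbb{B}$, i.e. $\mathrm{opt}_{k}^{\mathrm{frac}}(\mathbb{A},\mathbb{C})\ge\mathrm{opt}_{k}^{\mathrm{frac}}(\mathbb{B},\mathbb{C})$ for every $\sigma$-structure $\mathbb{C}$.
   Context: A $\sigma$-structure $\mathbb{A}$ is a finite domain $A$ with functions $f^{\mathbb{A}}\colon A^{\mathrm{ar}(f)}\to\mathbb{Q}_{\ge0}$, $f\in\sigma$; $\mathrm{tup}(\mathbb{A})$ is the set of pairs $(f,\bar x)$ with $\bar x\in A^{\mathrm{ar}(f)}$. An overcast from $\mathbb{A}$ to $\mathbb{B}$ is a probability distribution $\omega$ over maps $g\colon A\to B$ such that for every $(f,\bar x)\in\mathrm{tup}(\mathbb{B})$, $\mathbb{E}_{g\sim\omega}\sum_{\bar y:\,g(\bar y)=\bar x}f^{\mathbb{A}}(\bar y)\ge f^{\mathbb{B}}(\bar x)$. For a tuple $\bar x$, $\{\bar x\}$ denotes the set of its entries. The Sherali–Adams relaxation of level $k$ of $(\mathbb{A},\mathbb{C})$ is the linear program with a variable $\lambda(X,s)$ for each $X\subseteq A$ with $|X|\le k$ and each map $s\colon X\to C$, maximising $\sum_{(f,\bar x)\in\mathrm{tup}(\mathbb{A})}\sum_{s\colon\{\bar x\}\to C}\lambda(\{\bar x\},s)f^{\mathbb{A}}(\bar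 x)f^{\mathbb{C}}(s(\bar x))$ subject to: $\lambda(X,s)=\sum_{r\colon Y\to C,\ r|_X=s}\lambda(Y,r)$ for all $X\subseteq Y\subseteq A$ with $|Y|\le k$ and $s\colon X\to C$; $\sum_{s\colon X\to C}\lambda(X,s)=1$ for all $X\subseteq A$ with $|X|\le k$; and $\lambda(X,s)\ge0$. Its optimum value is denoted $\mathrm{opt}_k^{\mathrm{frac}}(\mathbb{A},\mathbb{C})$. *)

From HB Require Import structures.
From mathcomp Require Import all_boot all_order all_algebra.
From mathcomp Require Import classical_sets reals.
Set Implicit Arguments. Unset Strict Implicit. Unset Printing Implicit Defensive.
Import Order.TTheory GRing.Theory Num.Theory.
Local Open Scope ring_scope.
Local Open Scope classical_set_scope.

Section Defs.
Variables (sig : finType) (ar : sig -> nat).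

Definition sstruct (A : finType) := forall f : sig, (ar f).-tuple A -> rat.

Definition nonneg_struct (A : finType) (SA : sstruct A) :=
  forall f x, 0 <= SA f x.

Definition overcast (R : realType) (A B : finType) (SA : sstruct A)
    (SB : sstruct B) (omega : {ffun A -> B} -> R) :=
  [/\ forall g, 0 <= omega g,
      \sum_(g : {ffun A -> B}) omega g = 1 &
      forall (f : sig) (x : (ar f).-tuple B),
        ratr (SB f x) <=
        \sum_(g : {ffun A -> B})
           omega g * \sum_(y : (ar f).-tuple A | map_tuple g y == x)
                        ratr (SA f y)].

Definition exists_overcast (R : realType) (A B : finType) (SA : sstruct A)
    (SB : sstruct B) := exists omega : {ffun A -> B} -> R, overcast SA SB omega.

(* A map s : X -> C with X a subset of A is encoded as a partial map
   s : {ffun A -> option C} with domain X = pdom s (s x = None iff x \notin X).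
   This is a bijective encoding of the pairs (X, s) indexing the variables. *)
Definition pdom (A C : finType) (s : {ffun A -> option C}) : {set A} :=
  [set x | s x != None].

Definition prestr (A C : finType) (X : {set A}) (r : {ffun A -> option C}) :
  {ffun A -> option C} := [ffun x => if x \in X then r x else None].

(* Feasible solutions of the level-k Sherali-Adams relaxation of (A, C).
   lam s is the variable lambda(pdom s, s); for #|pdom s| > k there is no
   such variable, and we fix lam s = 0 (these values never enter the
   objective when k >= max arity). *)
Definition SA_feasible (R : realType) (k : nat) (A C : finType)
    (lam : {ffun A -> option C} -> R) :=
  [/\ forall s, (k < #|pdom s|)%N -> lam s = 0,
      forall (X Y : {set A}) (s : {ffun A -> option C}),
        X \subset Y -> (#|Y| <= k)%N -> pdom s = X ->
        lam s = \sum_(r : {ffun A -> option C} |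
                        (pdom r == Y) && (prestr X r == s)) lam r,
      forall X : {set A}, (#|X| <= k)%N ->
        \sum_(s : {ffun A -> option C} | pdom s == X) lam s = 1 &
      forall s, (#|pdom s| <= k)%N -> 0 <= lam s].

(* Objective: sum over (f,x) in tup(A), s : {x} -> C of
   lambda({x}, s) f^A(x) f^C(s(x)).  For s with domain {x}, s(x) is the
   unique tuple t with s(x_i) = Some t_i. *)
Definition SA_value (R : realType) (A C : finType) (SA : sstruct A)
    (SC : sstruct C) (lam : {ffun A -> option C} -> R) : R :=
  \sum_(f : sig) \sum_(x : (ar f).-tuple A)
    \sum_(s : {ffun A -> option C} | pdom s == [set y in x])
      \sum_(t : (ar f).-tuple C | [forall i, s (tnth x i) == Some (tnth t i)])
        lam s * ratr (SA f x) * ratr (SC f t).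

Definition opt_frac (R : realType) (k : nat) (A C : finType) (SA : sstruct A)
    (SC : sstruct C) : R :=
  sup [set SA_value SA SC lam | lam in [set lam | SA_feasible k lam]].
End Defs.

From HB Require Import structures.
From mathcomp Require Import all_boot all_order all_algebra.
From mathcomp Require Import boolp classical_sets reals.
Import Order.TTheory GRing.Theory Num.Theory.
Local Open Scope ring_scope.
Local Open Scope classical_set_scope.

(* Pull a feasible solution [lam] of the level-k relaxation of (B, C) back
   along each map [g : A -> B], setting lambda_g(X, s) to the sum of
   lambda(g(X), r) over the [r] with [r o g = s] on [X], and average these
   pullbacks with the weights of the overcast.  Each pullback is feasible
   because [|g(X)| <= |X|], hence so is the average.  Since every tuple of A
   spans at most [k] points, the objective of the average regroups as
   [sum_(f, y) w_f(y) * E_g sum_(g(x) = y) f^A(x)], where [w_f(y)] is the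
   contribution of [lam] at [y]; the overcast inequality bounds this below by
   [sum_(f, y) w_f(y) * f^B(y)], the objective of [lam].  All objectives are
   nonnegative and bounded, so the suprema compare the same way. *)

Lemma big_fiber {R : Type} {idx : R} {op : Monoid.com_law idx}
    {T U : finType} (P : pred T) (Q : pred U) (h : T -> U) (F : U -> T -> R) :
  \big[op/idx]_(u | Q u) \big[op/idx]_(t | P t && (h t == u)) F u t =
  \big[op/idx]_(t | P t && Q (h t)) F (h t) t.
Proof.
rewrite (partition_big h Q) /=; last by move=> t /andP[].
apply: eq_bigr => u Qu; apply: eq_big => [t|t /andP[_ /eqP->]] //.
by case: eqP => [->|_]; rewrite ?Qu ?andbT ?andbF.
Qed.

Lemma sum_mix_fibers {R : comNzRingType} {G X Y : finType} (om : G -> R)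
    (h : G -> X -> Y) (a : X -> R) (T : Y -> R) :
  \sum_x a x * \sum_g om g * T (h g x) =
  \sum_y T y * \sum_g om g * \sum_(x | h g x == y) a x.
Proof.
transitivity (\sum_g om g * \sum_x a x * T (h g x)).
  under eq_bigr do rewrite mulr_sumr.
  rewrite exchange_big; apply: eq_bigr => g _; rewrite mulr_sumr.
  by apply: eq_bigr => x _; rewrite mulrCA.
under [RHS]eq_bigr do rewrite mulr_sumr.
rewrite [RHS]exchange_big; apply: eq_bigr => g _.
rewrite (partition_big (h g) xpredT) // !mulr_sumr; apply: eq_bigr => y _.
rewrite (eq_bigr (fun x => a x * T y)); last by move=> x /eqP->.
by rewrite -mulr_suml mulrA mulrC.
Qed.

Lemma sup_ge0 {R : realType} (S : set R) :
  (forall x, S x -> 0 <= x) -> 0 <= sup S.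
Proof.
move=> S_ge0; have [hS|/sup_out->//] := pselect (has_sup S).
have [[x Sx] _] := hS.
exact: le_trans (S_ge0 x Sx) (sup_upper_bound hS Sx).
Qed.

Lemma sup_le_ge0 {R : realType} (S T : set R) :
  S `<=` down T -> has_ubound T -> (forall y, T y -> 0 <= y) -> sup S <= sup T.
Proof.
move=> ST T_ub T_ge0; have [[x Sx]|S0] := pselect (S !=set0).
  have /downP[y Ty _] := ST x Sx.
  by apply: sup_le => //; [exists x | split => //; exists y].
suff -> : S = set0 by rewrite sup0 sup_ge0.
by apply/seteqP; split => // x Sx; apply: S0; exists x.
Qed.

Section PartialMaps.
Context {A B C : finType}.
Implicit Types (X Y : {set A}) (u : {ffun A -> option C}) (g : {ffun A -> B}).

Definition pcomp (r : {ffun B -> option C}) g : {ffun A -> option C} :=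
  [ffun a => r (g a)].

Lemma pdom_prestr X u : X \subset pdom u -> pdom (prestr X u) = X.
Proof.
move=> /fintype.subsetP sXu; apply/setP => a; rewrite !inE ffunE.
by case: ifP => // /sXu; rewrite inE.
Qed.

Lemma pdom_pcomp r g : pdom (pcomp r g) = g @^-1: pdom r.
Proof. by apply/setP => a; rewrite !inE ffunE. Qed.

Lemma pdom_prestr_pcomp X r g :
  pdom r = g @: X -> pdom (prestr X (pcomp r g)) = X.
Proof. by move=> dr; rewrite pdom_prestr // pdom_pcomp dr -sub_imset_pre. Qed.

Lemma prestr_prestr X Y u : X \subset Y -> prestr X (prestr Y u) = prestr X u.
Proof.
move=> /fintype.subsetP sXY; apply/ffunP => a; rewrite !ffunE.
by case: ifP => // /sXY ->.
Qed.

Lemma prestr_pcomp_prestr X r g :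
  prestr X (pcomp (prestr (g @: X) r) g) = prestr X (pcomp r g).
Proof.
by apply/ffunP => a; rewrite !ffunE; case: ifP => // aX; rewrite imset_f.
Qed.

End PartialMaps.

Section Feasible.
Context {R : realType} {k : nat} {A C : finType}.
Implicit Types lam : {ffun A -> option C} -> R.

Lemma SA_feasible_ge0 {lam} s : SA_feasible k lam -> 0 <= lam s.
Proof.
by case=> lam0 _ _ lam_ge0; case: (leqP #|pdom s| k) => [/lam_ge0 | /lam0 ->].
Qed.

Lemma SA_feasible_le1 {lam} s : SA_feasible k lam -> lam s <= 1.
Proof.
move=> Flam; have [lam0 _ lam_sum1 _] := Flam.
case: (leqP #|pdom s| k) => [hs|/lam0 -> //].
rewrite -(lam_sum1 _ hs) (bigD1 s) //= lerDl.
by apply: sumr_ge0 => r _; apply: SA_feasible_ge0.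
Qed.

Lemma SA_feasible_mix (I : finType) (om : I -> R)
    (lams : I -> {ffun A -> option C} -> R) :
    (forall i, 0 <= om i) -> \sum_i om i = 1 ->
    (forall i, SA_feasible k (lams i)) ->
  SA_feasible k (fun s => \sum_i om i * lams i s).
Proof.
move=> om0 om1 Flams; split.
- move=> s hs; apply: big1 => i _.
  by case: (Flams i) => lam0 _ _ _; rewrite lam0 ?mulr0.
- move=> X Y s sXY hY ds; rewrite [RHS]exchange_big; apply: eq_bigr => i _.
  by rewrite -mulr_sumr; case: (Flams i) => _ lam_restr _ _; rewrite -lam_restr.
- move=> X hX; rewrite exchange_big -om1; apply: eq_bigr => i _.
  rewrite -mulr_sumr; case: (Flams i) => _ _ lam_sum1 _.
  by rewrite lam_sum1 ?mulr1.
- move=> s _; apply: sumr_ge0 => i _.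
  by rewrite mulr_ge0 ?(SA_feasible_ge0 _ (Flams i)).
Qed.

End Feasible.

Section Pullback.
Context {R : realType} {A B C : finType}.
Variables (k : nat) (g : {ffun A -> B}).
Variable lam : {ffun B -> option C} -> R.
Implicit Types (X Y : {set A}) (s : {ffun A -> option C}).

Definition pullback_at X s : R :=
  \sum_(q | (pdom q == g @: X) && (prestr X (pcomp q g) == s)) lam q.

Definition pullback s : R :=
  if (#|pdom s| <= k)%N then pullback_at (pdom s) s else 0.

Lemma sum_pullback_at X (P : pred {ffun A -> option C}) :
  \sum_(s | P s) pullback_at X s =
  \sum_(q | (pdom q == g @: X) && P (prestr X (pcomp q g))) lam q.
Proof. exact: (big_fiber _ _ (fun q => prestr X (pcomp q g)) (fun=> lam)). Qed.

Hypothesis Flam : SA_feasible k lam.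

Lemma pullback_at_refine {X Y} s : X \subset Y -> (#|Y| <= k)%N ->
  pullback_at X s =
  \sum_(q | (pdom q == g @: Y) && (prestr X (pcomp q g) == s)) lam q.
Proof.
move=> sXY hY; have [_ lam_restr _ _] := Flam.
have sgXY : g @: X \subset g @: Y := imsetS g sXY.
have hgY : (#|g @: Y| <= k)%N := leq_trans (leq_imset_card _ _) hY.
rewrite /pullback_at (eq_bigr (fun r => \sum_(q | (pdom q == g @: Y) &&
    (prestr (g @: X) q == r)) lam q)); last first.
  by move=> r /andP[/eqP dr _]; apply: lam_restr.
rewrite (big_fiber _ _ (prestr (g @: X)) (fun=> lam)).
apply: eq_bigl => q; apply: andb_id2l => /eqP dq.
by rewrite pdom_prestr ?dq // eqxx prestr_pcomp_prestr.
Qed.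

Lemma SA_feasible_pullback : SA_feasible k pullback.
Proof.
have [_ _ lam_sum1 _] := Flam; split.
- by move=> s hs; rewrite /pullback leqNgt hs.
- move=> X Y s sXY hY ds.
  have hX := leq_trans (subset_leq_card sXY) hY.
  rewrite /pullback ds hX (pullback_at_refine s sXY hY).
  rewrite (eq_bigr (pullback_at Y)); last first.
    by move=> t /andP[/eqP dt _]; rewrite /pullback dt hY.
  rewrite sum_pullback_at; apply: eq_bigl => q; apply: andb_id2l => /eqP dq.
  by rewrite pdom_prestr_pcomp // eqxx prestr_prestr.
- move=> X hX.
  rewrite (eq_bigr (pullback_at X)); last first.
    by move=> s /eqP ds; rewrite /pullback ds hX.
  rewrite sum_pullback_at (eq_bigl (fun q => pdom q == g @: X)).
    by rewrite lam_sum1 // (leq_trans (leq_imset_card _ _) hX).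
  by move=> q; apply: andb_idr => /eqP dq; rewrite pdom_prestr_pcomp.
- move=> s _; rewrite /pullback; case: ifP => // _.
  by apply: sumr_ge0 => q _; exact: SA_feasible_ge0 Flam.
Qed.

End Pullback.

Section Value.
Context {R : realType} {sig : finType} {ar : sig -> nat} {C : finType}.
Variable SC : sstruct ar C.

(* [f^C(r(y))] when [r] is defined on every entry of [y]: the sum then has
   exactly one term. *)
Definition pmap_value {B : finType} {f} (y : (ar f).-tuple B)
    (r : {ffun B -> option C}) : R :=
  \sum_(t : (ar f).-tuple C | [forall i, r (tnth y i) == Some (tnth t i)])
    ratr (SC f t).

Definition tuple_value {B : finType} (lam : {ffun B -> option C} -> R) {f}
    (y : (ar f).-tuple B) : R :=
  \sum_(r | pdom r == [set z in y]) lam r * pmap_value y r.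

Lemma SA_valueE (A : finType) (SA : sstruct ar A) lam :
  SA_value SA SC lam =
  \sum_f \sum_(x : (ar f).-tuple A) ratr (SA f x) * tuple_value lam x.
Proof.
apply: eq_bigr => f _; apply: eq_bigr => x _; rewrite mulr_sumr.
apply: eq_bigr => s _; rewrite !mulr_sumr; apply: eq_bigr => t _.
by rewrite [RHS]mulrCA mulrA.
Qed.

Lemma tuple_value_mix (I B : finType) (om : I -> R)
    (lams : I -> {ffun B -> option C} -> R) f (y : (ar f).-tuple B) :
  tuple_value (fun r => \sum_i om i * lams i r) y =
  \sum_i om i * tuple_value (lams i) y.
Proof.
rewrite /tuple_value; under eq_bigr do rewrite mulr_suml.
rewrite exchange_big; apply: eq_bigr => i _; rewrite mulr_sumr.
by apply: eq_bigr => r _; rewrite mulrA.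
Qed.

Lemma pmap_value_pcomp (A B : finType) (g : {ffun A -> B}) f
    (x : (ar f).-tuple A) (r : {ffun B -> option C}) :
  pmap_value x (prestr [set y in x] (pcomp r g)) = pmap_value (map_tuple g x) r.
Proof.
apply: eq_bigl => t; apply: eq_forallb => i.
by rewrite !ffunE inE mem_tnth tnth_map.
Qed.

Lemma imset_set_tuple (A B : finType) (g : A -> B) n (x : n.-tuple A) :
  g @: [set y in x] = [set z in map_tuple g x].
Proof.
apply/setP => z; rewrite inE; apply/imsetP/mapP => -[y yx ->]; exists y => //.
  by rewrite inE in yx.
by rewrite inE.
Qed.

Lemma tuple_value_pullback k (A B : finType) (g : {ffun A -> B})
    (lam : {ffun B -> option C} -> R) f (x : (ar f).-tuple A) :
    (#|[set y in x]| <= k)%N ->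
  tuple_value (pullback k g lam) x = tuple_value lam (map_tuple g x).
Proof.
move=> hx; rewrite /tuple_value.
rewrite (eq_bigr (fun s => \sum_(q | (pdom q == g @: [set y in x]) &&
    (prestr [set y in x] (pcomp q g) == s)) lam q * pmap_value x s));
  last by move=> s /eqP ds; rewrite /pullback ds hx mulr_suml.
rewrite big_fiber -imset_set_tuple; apply: eq_big => q.
  by apply: andb_idr => /eqP dq; rewrite pdom_prestr_pcomp.
by rewrite pmap_value_pcomp.
Qed.

End Value.

Section ValueBounds.
Context {R : realType} {sig : finType} {ar : sig -> nat} {C : finType}.
Context {SC : sstruct ar C}.
Hypothesis SC_ge0 : nonneg_struct SC.

Lemma tuple_value_ge0 {B : finType} {lam : {ffun B -> option C} -> R} {k f}
    (y : (ar f).-tuple B) :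
  SA_feasible k lam -> 0 <= tuple_value SC lam y.
Proof.
move=> Flam; apply: sumr_ge0 => r _.
rewrite mulr_ge0 ?(SA_feasible_ge0 _ Flam) //.
by apply: sumr_ge0 => t _; rewrite ler0q.
Qed.

Lemma SA_value_ge0 {A : finType} {SA : sstruct ar A}
    {lam : {ffun A -> option C} -> R} {k} :
  nonneg_struct SA -> SA_feasible k lam -> 0 <= SA_value SA SC lam.
Proof.
move=> SA_ge0 Flam; rewrite SA_valueE; apply: sumr_ge0 => f _.
apply: sumr_ge0 => x _; rewrite mulr_ge0 ?ler0q //.
exact: tuple_value_ge0 x Flam.
Qed.

Lemma SA_value_le_ones {A : finType} {SA : sstruct ar A}
    {lam : {ffun A -> option C} -> R} {k} :
  nonneg_struct SA -> SA_feasible k lam ->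
  SA_value SA SC lam <= SA_value SA SC (fun=> 1).
Proof.
move=> SA_ge0 Flam; apply: ler_sum => f _; apply: ler_sum => x _.
apply: ler_sum => s _; apply: ler_sum => t _.
rewrite -[X in X <= _]mulrA -[X in _ <= X]mulrA.
by rewrite ler_wpM2r ?(SA_feasible_le1 _ Flam) // mulr_ge0 ?ler0q.
Qed.

End ValueBounds.

Definition overcast_pullback {R : realType} {A B C : finType} (k : nat)
    (om : {ffun A -> B} -> R) (lam : {ffun B -> option C} -> R)
    (s : {ffun A -> option C}) : R :=
  \sum_g om g * pullback k g lam s.

Section Overcast.
Context {R : realType} {sig : finType} {ar : sig -> nat} {A B C : finType}.
Context {SA : sstruct ar A} {SB : sstruct ar B} {k : nat}.
Context {om : {ffun A -> B} -> R} {lam : {ffun B -> option C} -> R}.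
Hypotheses (om_overcast : overcast SA SB om) (Flam : SA_feasible k lam).

Lemma SA_feasible_overcast_pullback :
  SA_feasible k (overcast_pullback k om lam).
Proof.
have [om_ge0 om_sum1 _] := om_overcast.
by apply: SA_feasible_mix => // g; apply: SA_feasible_pullback.
Qed.

Lemma SA_value_overcast_pullback (SC : sstruct ar C) :
  (\max_(f : sig) ar f <= k)%N -> nonneg_struct SC ->
  SA_value SB SC lam <= SA_value SA SC (overcast_pullback k om lam).
Proof.
move=> hk SC_ge0; have [_ _ om_cover] := om_overcast.
rewrite !SA_valueE; apply: ler_sum => f _.
rewrite (eq_bigr (fun x => ratr (SA f x) *
    \sum_g om g * tuple_value SC lam (map_tuple g x))); last first.
  move=> x _; rewrite tuple_value_mix; congr (_ * _); apply: eq_bigr => g _.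
  rewrite tuple_value_pullback // cardsE (leq_trans (card_size _)) //.
  by rewrite size_tuple (leq_trans (leq_bigmax f)).
rewrite sum_mix_fibers; apply: ler_sum => y _.
rewrite mulrC ler_wpM2l ?om_cover //.
exact: (tuple_value_ge0 SC_ge0 y Flam).
Qed.

End Overcast.

Theorem proposition23 (R : realType) (sig : finType) (ar : sig -> nat)
  (A B : finType) (SA : sstruct ar A) (SB : sstruct ar B)
  (hA : nonneg_struct SA) (hB : nonneg_struct SB)
  (k : nat) (hk : (\max_(f : sig) ar f <= k)%N) :
  exists_overcast R SA SB ->
  forall (C : finType) (SC : sstruct ar C), nonneg_struct SC ->
    opt_frac R k SB SC <= opt_frac R k SA SC.
Proof.
move=> [om om_overcast] C SC hC; apply: sup_le_ge0.
- move=> _ [lam Flam <-]; apply/downP.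
  exists (SA_value SA SC (overcast_pullback k om lam)).
    exists (overcast_pullback k om lam) => //.
    exact: (SA_feasible_overcast_pullback om_overcast Flam).
  exact: (SA_value_overcast_pullback om_overcast Flam SC hk hC).
- exists (SA_value SA SC (fun=> 1)) => _ [lam Flam <-].
  exact: (SA_value_le_ones hC hA Flam).
- move=> _ [lam Flam <-]; exact: (SA_value_ge0 hC hA Flam).
Qed.
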